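(* Let $R$ be a semiprimary ring of Loewy length $\ell$ with Jacobson radical $\mathscr{J}$. Then $R$ is rigid if and only if, for all $1\le i\le\ell$, $$\{x\in R\mid \mathscr{J}^{\ell-i}x=0\}=\mathscr{J}^i=\{x\in R\mid x\mathscr{J}^{\ell-i}=0\}.$$
   Context: A ring $R$ is semiprimary if its Jacobson radical $\mathscr{J}$ is nilpotent and $R/\mathscr{J}$ is semisimple; its Loewy length $\ell$ is the nilpotency index of $\mathscr{J}$, with $\mathscr{J}^0=R$. A finite-length module is rigid if it has exactly one Loewy filtration (a filtration with semisimple subquotients of minimal length); $R$ is rigid if both the left regular module ${}_RR$ and the right regular module $R_R$ are rigid. *)

(* General (possibly noncommutative, possibly infinite) rings
   with 1 <> 0 are modelled by [nzRingType]; subsets of R by predicates R -> Prop. *)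
From HB Require Import structures.
From mathcomp Require Import all_boot all_algebra.
Set Implicit Arguments. Unset Strict Implicit. Unset Printing Implicit Defensive.
Import GRing.Theory.
Local Open Scope ring_scope.

Section RingDefs.
Variable R : nzRingType.

Definition sub_set (A B : R -> Prop) := forall x, A x -> B x.
Definition set_eq (A B : R -> Prop) := forall x, A x <-> B x.
Definition zero_set : R -> Prop := fun x => x = 0.
Definition full_set : R -> Prop := fun _ => True.
Definition set_add (A B : R -> Prop) : R -> Prop :=
  fun x => exists a b, [/\ A a, B b & x = a + b].
Definition set_cap (A B : R -> Prop) : R -> Prop := fun x => A x /\ B x.

(* submodules of the left regular module _R R *)
Definition left_ideal (I : R -> Prop) :=
  [/\ I 0, (forall x y, I x -> I y -> I (x + y)) & (forall r x, I x -> I (r * x))].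

(* the subquotient N/L (L <= N submodules of _R R) is a semisimple module:
   every submodule K/L of N/L is a direct summand *)
Definition semisimple_subquot (L N : R -> Prop) :=
  forall K, left_ideal K -> sub_set L K -> sub_set K N ->
    exists K', [/\ left_ideal K', sub_set L K', sub_set K' N,
                   set_eq (set_add K K') N & set_eq (set_cap K K') L].

Definition left_ss_filtration (n : nat) (F : nat -> R -> Prop) :=
  [/\ set_eq (F 0%N) zero_set, set_eq (F n) full_set,
      (forall k, (k <= n)%N -> left_ideal (F k)) &
      (forall k, (k < n)%N -> sub_set (F k) (F k.+1) /\
                               semisimple_subquot (F k) (F k.+1))].

Definition left_loewy_filtration (n : nat) (F : nat -> R -> Prop) :=
  left_ss_filtration n F /\ (forall m G, left_ss_filtration m G -> (n <= m)%N).

Definition left_regular_rigid :=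
  (exists n F, left_loewy_filtration n F) /\
  (forall n F m G, left_loewy_filtration n F -> left_loewy_filtration m G ->
     n = m /\ forall k, (k <= n)%N -> set_eq (F k) (G k)).

Definition maximal_left_ideal (M : R -> Prop) :=
  [/\ left_ideal M, ~ M 1 &
      forall I, left_ideal I -> sub_set M I -> ~ I 1 -> set_eq I M].
Definition jacobson : R -> Prop := fun x => forall M, maximal_left_ideal M -> M x.

Definition set_mul (A B : R -> Prop) : R -> Prop :=
  fun x => exists s : seq (R * R),
    (forall p, p \in s -> A p.1 /\ B p.2) /\ x = \sum_(p <- s) p.1 * p.2.
Fixpoint set_pow (A : R -> Prop) (n : nat) : R -> Prop :=
  match n with 0%N => full_set | n'.+1 => set_mul (set_pow A n') A end.

Definition semiprimary :=
  (exists n, set_eq (set_pow jacobson n) zero_set) /\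
  semisimple_subquot jacobson full_set.

(* Loewy length = nilpotency index of J *)
Definition loewy_length (l : nat) :=
  set_eq (set_pow jacobson l) zero_set /\
  (forall k, (k < l)%N -> ~ set_eq (set_pow jacobson k) zero_set).

End RingDefs.

(* R is rigid: both _R R and R_R (= the left regular module of the
   converse ring R^c) are rigid *)
Definition rigid (R : nzRingType) :=
  left_regular_rigid R /\ left_regular_rigid (R^c)%type.

(* Semisimple subquotients of _R R are exactly those killed by J (one direction uses
   Zorn and the semisimplicity of R/J).  Hence every filtration of _R R with semisimple
   subquotients is squeezed between the radical filtration J^(l-k) and the socle
   filtration lann J^k, both of which have the minimal length l; so _R R is rigid iff
   the two coincide, i.e. lann J^(l-i) = J^i.  The right-hand condition is the same
   statement for the converse ring, whose top R/J is again semisimple because every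
   right ideal containing J is generated by an idempotent modulo J. *)

From mathcomp Require Import all_boot all_algebra.
From mathcomp Require Import boolp classical_sets.
From Stdlib Require Import Setoid Morphisms.
Import GRing.Theory.
Local Open Scope ring_scope.
Set Implicit Arguments. Unset Strict Implicit.

Section LeftIdeals.
Variable T : nzRingType.
Implicit Types A B C I Z : T -> Prop.

Lemma left_ideal0 I : left_ideal I -> I 0.
Proof. by case. Qed.

Lemma left_idealD I x y : left_ideal I -> I x -> I y -> I (x + y).
Proof. by case=> _ ID _; apply: ID. Qed.

Lemma left_idealM I r x : left_ideal I -> I x -> I (r * x).
Proof. by case=> _ _ IM; apply: IM. Qed.

Lemma left_idealN I x : left_ideal I -> I x -> I (- x).
Proof. by move=> hI Ix; rewrite -mulN1r; apply: left_idealM. Qed.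

Lemma left_idealB I x y : left_ideal I -> I x -> I y -> I (x - y).
Proof. by move=> hI Ix Iy; apply: left_idealD => //; apply: left_idealN. Qed.

Lemma left_ideal_full : left_ideal (@full_set T).
Proof. by []. Qed.

Lemma left_ideal_set_add A B : left_ideal A -> left_ideal B -> left_ideal (set_add A B).
Proof.
move=> hA hB; split.
- by exists 0, 0; rewrite addr0; split=> //; apply: left_ideal0.
- move=> x y [a [b [Aa Bb ->]]] [a' [b' [Aa' Bb' ->]]].
  by exists (a + a'), (b + b'); rewrite addrACA; split=> //; apply: left_idealD.
- move=> r x [a [b [Aa Bb ->]]]; exists (r * a), (r * b); rewrite mulrDr.
  by split=> //; apply: left_idealM.
Qed.

Lemma set_mul_sub A B Z : Z 0 -> (forall x y, Z x -> Z y -> Z (x + y)) ->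
  (forall a b, A a -> B b -> Z (a * b)) -> sub_set (set_mul A B) Z.
Proof.
move=> Z0 ZD Zab; rewrite /sub_set => x [s [Hs ->]].
elim: s Hs => [|p s IH] Hs; first by rewrite big_nil.
rewrite big_cons; apply: ZD; last by apply: IH => q qs; apply: Hs; rewrite inE qs orbT.
have /Hs[Ap Bp] : p \in p :: s by rewrite inE eqxx.
exact: Zab.
Qed.

Lemma set_mul0 A B : set_mul A B 0.
Proof. by exists [::]; rewrite big_nil. Qed.

Lemma set_mulD A B x y : set_mul A B x -> set_mul A B y -> set_mul A B (x + y).
Proof.
move=> [s1 [H1 ->]] [s2 [H2 ->]]; exists (s1 ++ s2); rewrite big_cat.
by split=> // p; rewrite mem_cat => /orP[]; auto.
Qed.

Lemma set_mul_pair A B a b : A a -> B b -> set_mul A B (a * b).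
Proof.
by move=> Aa Bb; exists [:: (a, b)]; rewrite big_seq1; split=> // p; rewrite inE => /eqP ->.
Qed.

Lemma set_mul_mono A A' B B' : sub_set A A' -> sub_set B B' ->
  sub_set (set_mul A B) (set_mul A' B').
Proof.
move=> hA hB; apply: set_mul_sub; [exact: set_mul0 | exact: set_mulD |].
by move=> a b Aa Bb; apply: set_mul_pair; auto.
Qed.

Lemma set_mulA A B C : sub_set (set_mul (set_mul A B) C) (set_mul A (set_mul B C)).
Proof.
apply: set_mul_sub; [exact: set_mul0 | exact: set_mulD |].
move=> u c; move: u; apply: set_mul_sub.
- by move=> _; rewrite mul0r; exact: set_mul0.
- by move=> x y hx hy Cc; rewrite mulrDl; apply: set_mulD; auto.
- by move=> a b Aa Bb Cc; rewrite -mulrA; apply: set_mul_pair => //; exact: set_mul_pair.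
Qed.

Lemma left_ideal_set_mul A B : left_ideal A -> left_ideal (set_mul A B).
Proof.
move=> hA; split; [exact: set_mul0 | exact: set_mulD |].
move=> r; apply: set_mul_sub.
- by rewrite mulr0; exact: set_mul0.
- by move=> x y hx hy; rewrite mulrDr; apply: set_mulD.
- by move=> a b Aa Bb; rewrite mulrA; apply: set_mul_pair => //; apply: left_idealM.
Qed.

Definition add_mul_set A B (x : T) : T -> Prop :=
  fun y => exists a b, [/\ A a, B b & y = a + b * x].

Lemma left_ideal_add_mul_set A B x :
  left_ideal A -> left_ideal B -> left_ideal (add_mul_set A B x).
Proof.
move=> hA hB; split.
- by exists 0, 0; rewrite mul0r addr0; split=> //; exact: left_ideal0.
- move=> y z [a1 [b1 [? ? ->]]] [a2 [b2 [? ? ->]]].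
  by exists (a1 + a2), (b1 + b2); rewrite mulrDl addrACA; split=> //; exact: left_idealD.
- move=> r y [a1 [b1 [? ? ->]]]; exists (r * a1), (r * b1); rewrite mulrDr mulrA.
  by split=> //; exact: left_idealM.
Qed.

Lemma add_mul_set_l A B x a : left_ideal B -> A a -> add_mul_set A B x a.
Proof.
by move=> hB Aa; exists a, 0; rewrite mul0r addr0; split=> //; exact: left_ideal0.
Qed.

Lemma add_mul_set_r A B x b : left_ideal A -> B b -> add_mul_set A B x (b * x).
Proof. by move=> hA Bb; exists 0, b; rewrite add0r; split=> //; exact: left_ideal0. Qed.

Lemma left_ideal_chain_union (F : (T -> Prop) -> Prop) :
  (forall X, F X -> left_ideal X) ->
  (forall X Y, F X -> F Y -> sub_set X Y \/ sub_set Y X) -> (exists X, F X) ->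
  left_ideal (fun x => exists X, F X /\ X x).
Proof.
move=> FL Ftot [X FX]; split.
- by exists X; split=> //; exact: left_ideal0 (FL _ FX).
- move=> x y [X1 [F1 x1]] [X2 [F2 y2]].
  case: (Ftot _ _ F1 F2) => h; [exists X2 | exists X1]; split=> //;
    apply: left_idealD; auto.
- by move=> r x [X1 [F1 x1]]; exists X1; split=> //; exact: left_idealM (FL _ F1) x1.
Qed.

End LeftIdeals.

Lemma zorn_nonempty_chains (T : Type) (P : (T -> Prop) -> Prop) (X0 : T -> Prop) :
  P X0 ->
  (forall F : (T -> Prop) -> Prop, (forall X, F X -> P X) ->
     (forall X Y, F X -> F Y -> (forall x, X x -> Y x) \/ (forall x, Y x -> X x)) ->
     (exists X, F X) -> P (fun x => exists X, F X /\ X x)) ->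
  exists A, P A /\ forall B, P B -> (forall x, A x -> B x) -> forall x, B x -> A x.
Proof.
move=> PX0 Hch.
(* [Zorn_bigcup] also bounds the empty chain, so the empty set is adjoined to [P]. *)
pose P' := fun X : T -> Prop => P X \/ (forall x, ~ X x).
have [|A [P'A Amax]] := @Zorn_bigcup T P'.
  move=> F FP Ftot.
  have [[X [FX PX]]|nF] := pselect (exists X, F X /\ P X).
    left.
    have -> : bigcup F id = (fun x => exists X, (fun Y => F Y /\ P Y) X /\ X x).
      apply/funext => x; apply/propext; split; last by case=> Y [[FY _] Yx]; exists Y.
      case=> Y FY Yx; exists Y; split=> //; split=> //.
      by case: (FP _ FY) => // hY; case: (hY x).
    apply: Hch; [by move=> Y [] | | by exists X].
    by move=> Y Z [FY _] [FZ _]; case: (Ftot _ _ FY FZ) => h; [left|right]; exact: h.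
  right => x [Y FY Yx].
  case: (FP _ FY) => [PY|hY]; last exact: (hY x).
  by apply: nF; exists Y.
have [PA|A0] := P'A.
  exists A; split=> // B PB AB x Bx.
  apply: contrapT => nAx; apply: (Amax B _ (or_introl PB)).
  by split=> // BA; exact: nAx (BA _ Bx).
exists X0; split=> // B PB _ x Bx; exfalso.
apply: (Amax B _ (or_introl PB)); split; first by move=> y /A0.
by move=> /(_ x Bx) /A0.
Qed.

Definition lann (T : nzRingType) (A : T -> Prop) : T -> Prop :=
  fun x => forall y, A y -> y * x = 0.

Definition rann (T : nzRingType) (A : T -> Prop) : T -> Prop :=
  fun x => forall y, A y -> x * y = 0.

Section RadicalAndSocle.
Variable T : nzRingType.
Variable J : T -> Prop.
Hypothesis left_ideal_J : left_ideal J.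
Hypothesis J_mulr : forall x r, J x -> J (x * r).
Hypothesis J_lunit : forall j, J j -> exists u, u * (1 - j) = 1.
Hypothesis semisimple_top : semisimple_subquot J (@full_set T).

Lemma left_ideal_pow m : left_ideal (set_pow J m).
Proof. elim: m => [|m IH] /=; [exact: left_ideal_full | exact: left_ideal_set_mul]. Qed.

Lemma set_pow_mulr m x r : set_pow J m x -> set_pow J m (x * r).
Proof.
case: m => [//|m] /=; move: x; apply: set_mul_sub.
- by rewrite mul0r; exact: set_mul0.
- by move=> x y hx hy; rewrite mulrDl; exact: set_mulD.
- by move=> a b ha hb; rewrite -mulrA; apply: set_mul_pair => //; exact: J_mulr.
Qed.

Lemma set_pow_mulJ m j y : J j -> set_pow J m y -> set_pow J m.+1 (j * y).
Proof.
move=> Jj; elim: m y => [|m IH] y /=.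
  by move=> _; rewrite -[j * y]mul1r; apply: set_mul_pair => //; exact: J_mulr.
move: y; apply: set_mul_sub.
- by rewrite mulr0; exact: set_mul0.
- by move=> x y hx hy; rewrite mulrDr; exact: set_mulD.
- by move=> a b ha hb; rewrite mulrA; apply: set_mul_pair => //; exact: IH.
Qed.

Lemma set_powS_sub m : sub_set (set_pow J m.+1) (set_pow J m).
Proof.
apply: set_mul_sub; [exact: left_ideal0 (left_ideal_pow m) |
  by move=> x y; apply: left_idealD (left_ideal_pow m) |].
by move=> a b ha _; exact: set_pow_mulr.
Qed.

Definition killed_by_J (L N : T -> Prop) := forall j x, J j -> N x -> L (j * x).

(* A complement [K'] of [K = L + J x] in [N] contains [(1 - j) x] for some [j] in [J],
   hence [x] itself, so [J x] lies in [K :&: K' = L]. *)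
Lemma semisimple_subquot_killed (L N : T -> Prop) :
  left_ideal L -> left_ideal N -> sub_set L N ->
  semisimple_subquot L N -> killed_by_J L N.
Proof.
move=> hL hN LN hss j x Jj Nx.
pose K := add_mul_set L J x.
have hK : left_ideal K := left_ideal_add_mul_set x hL left_ideal_J.
have LK : sub_set L K by move=> y; exact: add_mul_set_l.
have KN : sub_set K N.
  move=> y [l1 [j1 [Ll Jj' ->]]].
  by apply: left_idealD => //; [exact: LN | exact: left_idealM].
have [K' [hK' LK' K'N hadd hcap]] := hss K hK LK KN.
have [k [k' [[l1 [j1 [Ll1 Jj1 ->]]] Kk' Hx]]] := proj2 (hadd x) Nx.
have [u Hu] := J_lunit Jj1.
have K'x : K' x.
  have -> : x = u * ((1 - j1) * x) by rewrite mulrA Hu mul1r.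
  have -> : (1 - j1) * x = l1 + k' by rewrite mulrBl mul1r {1}Hx addrAC addrK.
  exact: left_idealM hK' (left_idealD hK' (LK' _ Ll1) Kk').
apply/(hcap (j * x)); split; first exact: add_mul_set_r.
exact: left_idealM.
Qed.

Definition partial_complement (L N K A : T -> Prop) :=
  [/\ left_ideal A, sub_set L A, sub_set A N & forall y, K y -> A y -> L y].

(* The left ideal [Ax] of all [r] with [r x] in [K + A] contains [J]; write [1 = a + b]
   along a complement [B] of [Ax].  Then [A + B x] is again a partial complement, so
   [b x] lies in [A] by maximality, and [x = a x + b x] lies in [K + A]. *)
Lemma maximal_partial_complement_spans (L N K A : T -> Prop) :
  left_ideal L -> left_ideal N -> left_ideal K -> sub_set L K -> killed_by_J L N ->
  partial_complement L N K A ->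
  (forall B, partial_complement L N K B -> sub_set A B -> sub_set B A) ->
  forall x, N x -> set_add K A x.
Proof.
move=> hL hN hK LK kill [hA LA AN capA] Amax x Nx.
have hKA := left_ideal_set_add hK hA.
pose Ax := fun r => set_add K A (r * x).
have hAx : left_ideal Ax.
  split.
  - by rewrite /Ax mul0r; exact: left_ideal0.
  - by move=> r s hr hs; rewrite /Ax mulrDl; apply: left_idealD.
  - by move=> r s hs; rewrite /Ax -mulrA; apply: left_idealM.
have JAx : sub_set J Ax.
  move=> j Jj; exists (j * x), 0; rewrite addr0.
  by split=> //; [exact: LK _ (kill _ _ Jj Nx) | exact: left_ideal0].
have [B [hB JB _ Badd Bcap]] := semisimple_top hAx JAx (fun _ _ => I).
have [a [b [Aa Bb e1]]] := proj2 (Badd 1) I.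
pose ABx := add_mul_set A B x.
have A_ABx : sub_set A ABx by move=> y; exact: add_mul_set_l.
have ABx_partial : partial_complement L N K ABx.
  split.
  - exact: left_ideal_add_mul_set.
  - by move=> y /LA; exact: A_ABx.
  - move=> y [k1 [c1 [Ak Bc ->]]].
    exact: left_idealD hN (AN _ Ak) (left_idealM _ hN Nx).
  - move=> y Ky [k1 [c1 [Ak Bc ey]]].
    have Axc : Ax c1.
      exists y, (- k1); split=> //; first exact: left_idealN hA Ak.
      by rewrite ey addrAC subrr add0r.
    have Jc : J c1 by apply/(Bcap c1); split.
    apply: capA => //; rewrite ey; apply: left_idealD => //; exact: LA _ (kill _ _ Jc Nx).
have Abx : A (b * x) by apply: (Amax _ ABx_partial A_ABx); exact: add_mul_set_r.
have [k1 [a1 [Kk1 Aa1 e2]]] : set_add K A (a * x) by [].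
exists k1, (a1 + b * x); split=> //; first exact: left_idealD.
by rewrite addrA -e2 -mulrDl -e1 mul1r.
Qed.

Lemma killed_semisimple_subquot (L N : T -> Prop) :
  left_ideal L -> left_ideal N -> sub_set L N ->
  killed_by_J L N -> semisimple_subquot L N.
Proof.
move=> hL hN LN kill K hK LK KN.
have [|F FP Ftot FX|A [PA Amax]] := @zorn_nonempty_chains T (partial_complement L N K) L.
- by split=> // y _.
- have hU : left_ideal (fun x => exists X, F X /\ X x).
    by apply: left_ideal_chain_union => // X /FP[].
  have [X FX'] := FX.
  split=> //.
  + by move=> y Ly; exists X; split=> //; case: (FP _ FX') => _ h _ _; apply: h.
  + by move=> y [X1 [F1 y1]]; case: (FP _ F1) => _ _ h _; apply: h.
  + by move=> y Ky [X1 [F1 y1]]; case: (FP _ F1) => _ _ _ h; apply: h.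
have span := maximal_partial_complement_spans hL hN hK LK kill PA Amax.
case: PA => hA LA AN capA.
exists A; split=> // x; split.
- by move=> [k [a [Kk Aa ->]]]; apply: left_idealD => //; auto.
- exact: span.
- by case=> Kx Ax; apply: capA.
- by move=> Lx; split; auto.
Qed.

Variable l : nat.
Hypothesis J_nilpotent : set_eq (set_pow J l) (@zero_set T).
Hypothesis J_pow_neq0 : forall k, (k < l)%N -> ~ set_eq (set_pow J k) (@zero_set T).

Definition radical_filtration k := set_pow J (l - k).
Definition socle_filtration k := lann (set_pow J k).

Lemma left_ss_radical_filtration : left_ss_filtration l radical_filtration.
Proof.
split.
- by rewrite /radical_filtration subn0.
- by rewrite /radical_filtration subnn.
- by move=> k _; exact: left_ideal_pow.
- move=> k lt_kl; rewrite /radical_filtration -subnSK //; split; first exact: set_powS_sub.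
  apply: killed_semisimple_subquot; [exact: left_ideal_pow | exact: left_ideal_pow |
    exact: set_powS_sub |].
  by move=> j x Jj; exact: set_pow_mulJ.
Qed.

Lemma left_ideal_lann (A : T -> Prop) :
  (forall x r, A x -> A (x * r)) -> left_ideal (lann A).
Proof.
move=> A_mulr; split.
- by move=> y _; rewrite mulr0.
- by move=> x z hx hz y hy; rewrite mulrDr hx // hz // addr0.
- by move=> r x hx y hy; rewrite mulrA; apply/hx/A_mulr.
Qed.

Lemma left_ss_socle_filtration : left_ss_filtration l socle_filtration.
Proof.
have hS k : left_ideal (socle_filtration k).
  by apply: left_ideal_lann => x r; exact: set_pow_mulr.
have S_mono k : sub_set (socle_filtration k) (socle_filtration k.+1).
  by move=> x hx y /set_powS_sub; exact: hx.
split=> //.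
- move=> x; split; last by move=> -> y _; rewrite mulr0.
  by move=> hx; rewrite /zero_set -[x]mul1r; apply: hx.
- by move=> x; split=> // _ y /J_nilpotent ->; rewrite mul0r.
- move=> k lt_kl; split=> //; apply: killed_semisimple_subquot => // j x Jj hx y hy.
  by rewrite mulrA; apply: hx; exact: set_mul_pair.
Qed.

(* Descending through a filtration with semisimple subquotients, each step is
   killed by [J], so [J^m] maps [F k] into [F (k - m)]. *)
Lemma left_ss_filtration_pow_mul n (F : nat -> T -> Prop) m k a x :
  left_ss_filtration n F -> (m <= k <= n)%N -> set_pow J m a -> F k x -> F (k - m)%N (a * x).
Proof.
case=> _ _ Fl Fs; elim: m k a x => [|m IH] k a x /andP[le_mk le_kn] ha hx.
  by rewrite subn0; exact: left_idealM (Fl k le_kn) hx.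
have hFkm := Fl (k - m.+1)%N (leq_trans (leq_subr _ _) le_kn).
move: a ha; apply: set_mul_sub; [by rewrite mul0r; exact: left_ideal0 hFkm |
  by move=> a b /= ha hb; rewrite mulrDl; apply: left_idealD |].
move=> a b ha Jb; rewrite -mulrA.
case: k le_mk le_kn hx hFkm => // k' le_mk lt_kn hx _.
have [sub ss] := Fs k' lt_kn.
have hbx : F k' (b * x).
  exact: semisimple_subquot_killed (Fl k' (ltnW lt_kn)) (Fl k'.+1 lt_kn) sub ss _ _ Jb hx.
by rewrite subSS; apply: IH => //; rewrite -ltnS le_mk (ltnW lt_kn).
Qed.

Lemma left_ss_filtration_bounds n (F : nat -> T -> Prop) k :
  left_ss_filtration n F -> (k <= n)%N ->
  sub_set (set_pow J (n - k)) (F k) /\ sub_set (F k) (socle_filtration k).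
Proof.
move=> hF le_kn; have [F0 Fn _ _] := hF; split.
  move=> a ha; rewrite -[a]mulr1.
  have := left_ss_filtration_pow_mul hF _ ha (proj2 (Fn 1) I).
  by rewrite subKn // leq_subr leqnn; apply.
move=> x hx y hy; apply/(F0 (y * x)).
by have := left_ss_filtration_pow_mul hF _ hy hx; rewrite subnn leqnn le_kn; apply.
Qed.

Lemma left_ss_filtration_length n (F : nat -> T -> Prop) :
  left_ss_filtration n F -> (l <= n)%N.
Proof.
move=> hF; rewrite leqNgt; apply/negP => lt_nl; apply: (J_pow_neq0 lt_nl) => x.
split; last by move=> ->; exact: left_ideal0 (left_ideal_pow n).
move=> hx; case: (hF) => F0 _ _ _; apply/F0.
by have [h _] := left_ss_filtration_bounds hF (leq0n n); apply: h; rewrite subn0.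
Qed.

Lemma left_loewy_filtrationE n (F : nat -> T -> Prop) : left_loewy_filtration n F <->
  left_ss_filtration n F /\ n = l.
Proof.
split=> [[hF minF] | [hF en]].
  split=> //; apply/eqP; rewrite eqn_leq (left_ss_filtration_length hF) andbT.
  exact: minF left_ss_radical_filtration.
by rewrite en in hF *; split=> // m G; exact: left_ss_filtration_length.
Qed.

Lemma left_regular_rigid_iff : left_regular_rigid T <->
  forall i : nat, (1 <= i <= l)%N -> set_eq (lann (set_pow J (l - i))) (set_pow J i).
Proof.
have loewy_rad : left_loewy_filtration l radical_filtration.
  by apply/left_loewy_filtrationE; split=> //; exact: left_ss_radical_filtration.
have loewy_soc : left_loewy_filtration l socle_filtration.
  by apply/left_loewy_filtrationE; split=> //; exact: left_ss_socle_filtration.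
split=> [[_ uniq] i /andP[i1 il] | soc_rad].
  have [_ /(_ (l - i)%N (leq_subr _ _))] := uniq _ _ _ _ loewy_rad loewy_soc.
  by rewrite /radical_filtration /socle_filtration subKn // => e x; split=> /e.
have loewy_rad_eq n F : left_loewy_filtration n F ->
    n = l /\ forall k, (k <= n)%N -> set_eq (F k) (radical_filtration k).
  move=> /left_loewy_filtrationE[hF en]; split=> // k le_kn x.
  have [rad_F F_soc] := left_ss_filtration_bounds hF le_kn; subst n.
  split=> [Fx|]; last exact: rad_F.
  have := F_soc x Fx; case: (ltnP k l) => [lt_kl|ge_kl] Sx.
    have i_range : (1 <= l - k <= l)%N by rewrite subn_gt0 lt_kl leq_subr.
    by apply/(soc_rad _ i_range x); rewrite subKn // ltnW.
  by rewrite /radical_filtration (eqP (_ : l - k == 0)%N) ?subn_eq0.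
split; first by exists l, radical_filtration.
move=> n F m G /loewy_rad_eq[en eF] /loewy_rad_eq[em eG].
split=> [|k le_kn x]; first by rewrite en em.
by rewrite eF // eG // em -en.
Qed.

End RadicalAndSocle.

Section IdempotentsModJ.
Variable T : nzRingType.
Variable J : T -> Prop.
Hypothesis left_ideal_J : left_ideal J.
Hypothesis J_mulr : forall x r, J x -> J (x * r).
Hypothesis semisimple_top : semisimple_subquot J (@full_set T).

Definition eqJ (a b : T) := J (a - b).

Lemma eqJ0 x : J x <-> eqJ x 0.
Proof. by rewrite /eqJ subr0. Qed.

#[local] Instance eqJ_equiv : Equivalence eqJ.
Proof.
split.
- by move=> a; rewrite /eqJ subrr; exact: left_ideal0.
- by move=> a b h; rewrite /eqJ -opprB; exact: left_idealN.
- by move=> a b c h1 h2; rewrite /eqJ -[a](subrK b) -addrA; exact: left_idealD.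
Qed.

Lemma eqJ_refl x : eqJ x x. Proof. reflexivity. Qed.
#[local] Hint Resolve eqJ_refl : core.

#[local] Instance eqJ_add : Proper (eqJ ==> eqJ ==> eqJ) (@GRing.add T).
Proof. by move=> a b h c d h'; rewrite /eqJ opprD addrACA; exact: left_idealD. Qed.

#[local] Instance eqJ_mul : Proper (eqJ ==> eqJ ==> eqJ) (@GRing.mul T).
Proof.
move=> a b h c d h'; rewrite /eqJ.
have -> : a * c - b * d = (a - b) * c + b * (c - d) by rewrite mulrBl mulrBr addrA subrK.
by apply: left_idealD => //; [exact: J_mulr | exact: left_idealM].
Qed.

#[local] Instance eqJ_opp : Proper (eqJ ==> eqJ) (@GRing.opp T).
Proof. by move=> a b h; rewrite /eqJ -opprD; exact: left_idealN. Qed.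

Lemma left_ideal_generator_modJ (A : T -> Prop) : left_ideal A -> sub_set J A ->
  exists e, A e /\ forall a, A a -> eqJ a (a * e).
Proof.
move=> hA JA; have [B [hB JB _ Badd Bcap]] := semisimple_top hA JA (fun _ _ => I).
have [e [b [Ae Bb e1]]] := proj2 (Badd 1) I.
exists e; split=> // a Aa; apply/(Bcap (a - a * e)); split.
  by apply: left_idealB => //; exact: left_idealM.
have -> : a - a * e = a * b by rewrite -{1}[a]mulr1 e1 mulrDr addrAC subrr add0r.
exact: left_idealM.
Qed.

(* [e = j + r x] generates [J + R x] modulo [J], and [x = x e] modulo [J]. *)
Lemma regular_modJ x : exists r, eqJ x (x * r * x).
Proof.
pose A := add_mul_set J (@full_set T) x.
have hA : left_ideal A := left_ideal_add_mul_set x left_ideal_J (left_ideal_full T).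
have JA : sub_set J A by move=> j; exact: add_mul_set_l.
have [e [[j [r [Jj _ ->]]] He]] := left_ideal_generator_modJ hA JA.
exists r; have Ax : A x by rewrite -[x]mul1r; exact: add_mul_set_r.
have := He x Ax; rewrite mulrDr mulrA => xe; rewrite {1}xe.
by move/eqJ0: (left_idealM x left_ideal_J Jj) => ->; rewrite add0r.
Qed.

Definition fix_set (e : T) : T -> Prop := fun a => eqJ a (a * e).

Lemma left_ideal_fix_set e : left_ideal (fix_set e).
Proof.
split.
- by rewrite /fix_set mul0r.
- move=> x y hx hy; rewrite /fix_set in hx hy *.
  by rewrite mulrDl -hx -hy.
- by move=> r x hx; rewrite /fix_set in hx *; rewrite -mulrA -hx.
Qed.

Lemma J_sub_fix_set e : sub_set J (fix_set e).
Proof. by move=> j /eqJ0 Jj; rewrite /fix_set Jj mul0r. Qed.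

Section RightIdeal.
Variable I : T -> Prop.
Hypothesis I_add : forall x y, I x -> I y -> I (x + y).
Hypothesis I_mulr : forall x r, I x -> I (x * r).
Hypothesis J_sub_I : sub_set J I.

Lemma I_opp x : I x -> I (- x).
Proof. by move=> Ix; rewrite -mulrN1; exact: I_mulr. Qed.

(* With [y = x - e x] and [g] an idempotent generator of [y R] modulo [J],
   [f = e + g - g e] is an idempotent of [I] absorbing both [e] and [x]. *)
Lemma idempotent_modJ_enlarge e x : I e -> eqJ (e * e) e -> I x ->
  exists f, [/\ I f, eqJ (f * f) f, eqJ (f * e) e,
               sub_set (fix_set e) (fix_set f) & eqJ (f * x) x].
Proof.
move=> Ie ee Ix.
pose y := x - e * x.
have ey : eqJ (e * y) 0 by rewrite /y mulrBr mulrA ee subrr.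
have [r hr] := regular_modJ y.
pose g := y * r.
have Ig : I g := I_mulr r (I_add Ix (I_opp (I_mulr x Ie))).
have eg : eqJ (e * g) 0 by rewrite /g mulrA ey mul0r.
have gg : eqJ (g * g) g by rewrite /g mulrA -hr.
have gy : eqJ (g * y) y by rewrite /g -hr.
clearbody g; pose f := e + g - g * e.
have ef : eqJ (e * f) e by rewrite /f !mulrDr mulrN mulrA eg mul0r addr0 subr0 ee.
have fe : eqJ (f * e) e by rewrite /f !mulrDl mulNr -mulrA ee addrK.
exists f; split=> //.
- exact: I_add (I_add Ie Ig) (I_opp (I_mulr e Ig)).
- rewrite {1}/f !mulrDl mulNr -mulrA ef /f !mulrDr mulrN gg mulrA gg.
  by rewrite [g * e + g]addrC addrK.
- by move=> a ha; rewrite /fix_set in ha *; rewrite {2}ha -mulrA ef -ha.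
- have -> : x = y + e * x by rewrite /y subrK.
  rewrite mulrDr mulrA fe.
  by rewrite /f !mulrDl mulNr -mulrA ey gy mulr0 add0r subr0.
Qed.

(* Zorn yields [e] whose [fix_set] is maximal among those of idempotents of [I];
   enlarging [e] by any [x] in [I] cannot grow it, which forces [e x = x]. *)
Lemma right_ideal_generator_modJ :
  exists e, [/\ I e, eqJ (e * e) e & forall x, I x -> eqJ x (e * x)].
Proof.
pose P A := exists e, [/\ I e, eqJ (e * e) e & set_eq A (fix_set e)].
have P_left A : P A -> left_ideal A.
  case=> e [_ _ hA]; have [A0 AD AM] := left_ideal_fix_set e.
  by split; [apply/hA | move=> x y /hA hx /hA hy; apply/hA; auto |
             move=> r x /hA hx; apply/hA; auto].
have [|F FP Ftot FX|A [[e [Ie ee hA]] Amax]] := @zorn_nonempty_chains T P J.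
- exists 0; split=> //; first by apply: J_sub_I; exact: left_ideal0.
  + by rewrite mul0r.
  + by move=> a; rewrite /fix_set mulr0 -eqJ0.
- have hU : left_ideal (fun x => exists X, F X /\ X x).
    by apply: left_ideal_chain_union => // X /FP/P_left.
  have JU : sub_set J (fun x => exists X, F X /\ X x).
    have [X FX'] := FX; have [e [_ _ hX]] := FP _ FX'.
    by move=> j Jj; exists X; split=> //; apply/hX; exact: J_sub_fix_set.
  have [u [[Y [FY Yu]] Hu]] := left_ideal_generator_modJ hU JU.
  have [e [Ie ee hY]] := FP _ FY.
  exists e; split=> // a; split=> [Ua | /hY Ya]; last by exists Y.
  have /hY Yu' := Yu; rewrite /fix_set in Yu' *.
  by rewrite (Hu a Ua) {1}Yu' mulrA -(Hu a Ua).
exists e; split=> // x Ix.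
have [f [If ff fe ef fx]] := idempotent_modJ_enlarge Ie ee Ix.
have Af : A f.
  apply: (Amax (fix_set f)); first by exists f.
    by move=> a /hA /ef.
  by rewrite /fix_set ff.
have /hA fe' := Af; rewrite /fix_set in fe'.
by rewrite -{1}fx {1}fe' fe.
Qed.

End RightIdeal.

Lemma semisimple_top_conv : semisimple_subquot (R:=T^c) J (@full_set T^c).
Proof.
move=> K hK JK _.
have KD : forall x y : T, K x -> K y -> K (x + y) by case: hK.
have KM : forall (x r : T), K x -> K (x * r) by case: hK => _ _ h x r; exact: h.
have [e [Ke ee e_fixK]] := right_ideal_generator_modJ KD KM JK.
pose C := fun c : T => J (e * c).
exists C; split.
- split.
  + by rewrite /C mulr0; exact: left_ideal0.
  + by move=> x y hx hy; rewrite /C mulrDr; exact: left_idealD.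
  + by move=> r x hx; have := J_mulr r hx; rewrite -mulrA.
- by move=> x Jx; exact: left_idealM.
- by [].
- move=> y; split=> // _; exists (e * y), (y - e * y); split.
  + exact: KM.
  + rewrite /C mulrBr mulrA.
    have -> : e * y - e * e * y = - ((e * e - e) * y) by rewrite mulrBl opprB.
    exact: left_idealN left_ideal_J (J_mulr y ee).
  + by rewrite addrC subrK.
- move=> x; split=> [[Kx Cx] | Jx]; last by split; [exact: JK | exact: left_idealM].
  by have := e_fixK x Kx; rewrite /eqJ => h; rewrite -(subrK (e * x) x); exact: left_idealD.
Qed.

End IdempotentsModJ.

Lemma nilpotent_unit (R : nzRingType) (j : R) N : j ^+ N = 0 ->
  exists u, u * (1 - j) = 1 /\ (1 - j) * u = 1.
Proof.
move=> jN; exists (\sum_(i < N) j ^+ i).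
have e1 : (1 - j) * \sum_(i < N) j ^+ i = 1.
  by rewrite -opprB mulNr -subrX1 jN sub0r opprK.
split=> //; have c : GRing.comm j (\sum_(i < N) j ^+ i).
  by apply: commr_sum => i _; exact: commrX.
by rewrite mulrBr mulr1 -c -{1}[\sum_(i < N) j ^+ i]mul1r -mulrBl.
Qed.

(* Left-inverse half of Jacobson's lemma. *)
Lemma lunit_subr_mulC (R : nzRingType) (a r u : R) :
  u * (1 - r * a) = 1 -> (1 + a * u * r) * (1 - a * r) = 1.
Proof.
move=> hu; have h2 : r * (1 - a * r) = (1 - r * a) * r.
  by rewrite mulrBr mulrBl mulr1 mul1r mulrA.
have h : a * u * r * (1 - a * r) = a * r by rewrite -!mulrA h2 [u * _]mulrA hu mul1r.
by rewrite mulrDl mul1r h subrK.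
Qed.

Section Jacobson.
Variable R : nzRingType.
Local Notation J := (@jacobson R).

Lemma left_ideal_jacobson : left_ideal J.
Proof.
split.
- by move=> M [[M0 _ _] _ _].
- move=> x y hx hy M hM; case: (hM) => hML _ _.
  exact: left_idealD hML (hx M hM) (hy M hM).
- by move=> r x hx M hM; case: (hM) => hML _ _; apply: left_idealM hML (hx M hM).
Qed.

Lemma set_pow_expr (A : R -> Prop) j m : A j -> set_pow A m (j ^+ m).
Proof. by move=> Aj; elim: m => [//|m IH] /=; rewrite exprSr; apply: set_mul_pair. Qed.

Hypothesis semiprimary_R : semiprimary R.

Lemma jacobson_unit j : J j -> exists u, u * (1 - j) = 1 /\ (1 - j) * u = 1.
Proof.
case: semiprimary_R => [[n J_nil] _] Jj; apply: (@nilpotent_unit _ j n).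
exact/(J_nil (j ^+ n))/set_pow_expr.
Qed.

(* If [x r] escapes a maximal left ideal [M] then [1 = m + t x r] with [m] in [M];
   but [1 - r t x] is a unit, hence so is [m = 1 - t x r] on the left. *)
Lemma jacobson_mulr x r : J x -> J (x * r).
Proof.
move=> Jx M hM; apply: contrapT => nM; case: (hM) => hML nM1 Mmax.
pose I := add_mul_set M (@full_set R) (x * r).
have hI : left_ideal I := left_ideal_add_mul_set _ hML (left_ideal_full R).
have MI : sub_set M I by move=> y; exact: add_mul_set_l.
have [m [t [Mm _ e]]] : I 1.
  apply: contrapT => nI1; apply: nM; apply/(Mmax I hI MI nI1 (x * r)).
  by rewrite -[x * r]mul1r; exact: add_mul_set_r.
have Jrtx : J (r * (t * x)) by do 2!apply: left_idealM left_ideal_jacobson _.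
have [u [hu _]] := jacobson_unit Jrtx.
have em : m = 1 - t * x * r by rewrite e -mulrA addrK.
by apply: nM1; rewrite -(lunit_subr_mulC hu) -em; exact: left_idealM.
Qed.

End Jacobson.

Lemma set_mul_conv (T : nzRingType) (A B : T -> Prop) :
  set_eq (set_mul (R:=T^c) A B) (set_mul B A).
Proof.
move=> x; split; move: x.
  apply: (@set_mul_sub T^c A B (set_mul (R:=T) B A)); [exact: set_mul0 |
    by move=> u v; exact: (@set_mulD T B A u v) |].
  by move=> a b Aa Bb; exact: (@set_mul_pair T B A b a).
apply: (@set_mul_sub T B A (set_mul (R:=T^c) A B)); [exact: set_mul0 |
  by move=> u v; exact: (@set_mulD T^c A B u v) |].
by move=> a b Aa Bb; exact: (@set_mul_pair T^c A B b a).
Qed.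

Section Converse.
Variable T : nzRingType.
Variable J : T -> Prop.
Hypothesis left_ideal_J : left_ideal J.
Hypothesis J_mulr : forall x r, J x -> J (x * r).

Lemma set_mul_J_pow m : set_eq (set_mul J (set_pow J m)) (set_pow J m.+1).
Proof.
move=> x; split; move: x.
  apply: set_mul_sub; [exact: left_ideal0 (left_ideal_pow J m.+1) |
    by move=> x y; apply: left_idealD (left_ideal_pow J m.+1) |].
  by move=> a b Ja hb; exact: set_pow_mulJ.
elim: m => [|m IH] /=; apply: set_mul_sub; try exact: set_mul0; try exact: set_mulD.
  by move=> a b _ Jb; rewrite -[a * b]mulr1; apply: set_mul_pair => //; exact: left_idealM.
by move=> a b ha Jb; apply: set_mulA; apply: set_mul_pair => //; apply/IH.
Qed.

Lemma set_pow_conv m : set_eq (set_pow (R:=T^c) J m) (set_pow J m).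
Proof.
elim: m => [//|m IH] x; rewrite -(set_mul_J_pow m x) /= set_mul_conv.
by split; apply: set_mul_mono => // y /IH.
Qed.

Lemma left_ideal_J_conv : left_ideal (R:=T^c) J.
Proof.
split; first exact: left_ideal0 left_ideal_J.
- by move=> x y; exact: left_idealD left_ideal_J.
- by move=> r x; exact: J_mulr.
Qed.

Lemma J_mulr_conv (x r : T^c) : J x -> J (x * r).
Proof. exact: left_idealM left_ideal_J. Qed.

Lemma set_pow_conv_eq0 k :
  set_eq (set_pow (R:=T^c) J k) (@zero_set T^c) <-> set_eq (set_pow J k) (@zero_set T).
Proof. by split=> h x; [rewrite -set_pow_conv | rewrite set_pow_conv]; exact: h. Qed.

Lemma lann_conv_eq m i : set_eq (lann (set_pow (R:=T^c) J m)) (set_pow (R:=T^c) J i) <->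
  set_eq (set_pow J i) (rann (set_pow J m)).
Proof.
split=> h x; split.
- by move=> /set_pow_conv/h hx y /set_pow_conv; exact: hx.
- by move=> hx; apply/set_pow_conv/h => y /set_pow_conv; exact: hx.
- by move=> hx; apply/set_pow_conv/h => y /set_pow_conv; exact: hx.
- by move=> /set_pow_conv/h hx y /set_pow_conv; exact: hx.
Qed.

End Converse.

Theorem lemma1p1 (R : nzRingType) (l : nat) :
  semiprimary R -> loewy_length R l ->
  (rigid R <->
   forall i : nat, (1 <= i <= l)%N ->
     set_eq (fun x : R => forall y, set_pow (@jacobson R) (l - i) y -> y * x = 0)
            (set_pow (@jacobson R) i) /\
     set_eq (set_pow (@jacobson R) i)
            (fun x : R => forall y, set_pow (@jacobson R) (l - i) y -> x * y = 0)).
Proof.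
move=> hs [J_nil J_pow_neq0].
have J_left := @left_ideal_jacobson R; have J_mulr := jacobson_mulr hs.
have J_lunit (j : R) : jacobson j -> exists u, u * (1 - j) = 1.
  by move=> Jj; have [u [hu _]] := jacobson_unit hs Jj; exists u.
have J_runit (j : R^c) : @jacobson R j -> exists u : R^c, u * (1 - j) = 1.
  by move=> Jj; have [u [_ hu]] := jacobson_unit hs Jj; exists u.
have conv_eq0 k := set_pow_conv_eq0 J_left J_mulr k.
rewrite /rigid (left_regular_rigid_iff J_left J_mulr J_lunit hs.2 J_nil J_pow_neq0).
rewrite (left_regular_rigid_iff (left_ideal_J_conv J_left J_mulr) (J_mulr_conv J_left)
  J_runit (semisimple_top_conv J_left J_mulr hs.2) (proj2 (conv_eq0 l) J_nil)
  (fun k lt_kl => contra_not (proj1 (conv_eq0 k)) (J_pow_neq0 k lt_kl))).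
split=> [[soc_rad soc_rad_conv] i hi | h]; first by split; [exact: soc_rad |
  exact/(lann_conv_eq J_left J_mulr)/soc_rad_conv].
by split=> i /h[]// _; rewrite -lann_conv_eq.
Qed.
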